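(* Let $G$ be a finitely generated group, $H$ a finitely generated subgroup, $A$ a finite alphabet, $S\subseteq H$ finite and $\mu:A^S\to A$. Let $\Phi_H:A^H\to A^H$ and $\Phi_G:A^G\to A^G$ be the cellular automata defined by $\Phi_H(x)(h)=\mu(s\mapsto x(hs))$ and $\Phi_G(x)(g)=\mu(s\mapsto x(gs))$. If $\Phi_G$ is sensitive to initial conditions, then so is $\Phi_H$.
   Context: Metrics: fix a finite generating set $E_H$ of $H$ closed under inverses and a finite generating set $D\supseteq E_H$ of $G$ closed under inverses, with word metrics $d_H$, $d_G$. The Cantor metric on $A^H$ is $d^H(x,y)=2^{-k}$ with $k=\min\{d_H(1,h):x(h)\neq y(h)\}$, and on $A^G$ similarly $d^G$ using $d_G$; $B^H$, $B^G$ denote closed balls. A map $\Phi$ on such a space with balls $B$ is sensitive to initial conditions if $\exists\epsilon>0\,\forall x\,\forall\delta>0\,\exists t\in\mathbb{N}\,\exists y\in B(x,\delta)$ with $\Phi^t(y)\notin B(\Phi^t(x),\epsilon)$. (This notion does not depend on the choice of generating sets.) *)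

From Stdlib Require Import Reals List ClassicalEpsilon.
Open Scope R_scope.

Record group := Group {
  carrier :> Type;
  gmul : carrier -> carrier -> carrier;
  ginv : carrier -> carrier;
  gone : carrier;
  gmulA : forall a b c, gmul a (gmul b c) = gmul (gmul a b) c;
  gmul1 : forall a, gmul gone a = a;
  gmulV : forall a, gmul (ginv a) a = gone }.

Arguments gmul {g}.
Arguments ginv {g}.
Arguments gone {g}.

Definition inv_closed {G : group} (E : list G) : Prop :=
  forall s, In s E -> In (ginv s) E.

Definition wordlen_le {G : group} (E : list G) (g : G) (n : nat) : Prop :=
  exists l : list G, (length l <= n)%nat /\ (forall s, In s l -> In s E) /\
    g = fold_right gmul gone l.

(* E generates G (as a monoid; for inverse-closed E, this is generation as a group). *)
Definition generates {G : group} (E : list G) : Prop :=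
  forall g, exists n, wordlen_le E g n.

(* Least natural number satisfying P (0 if none exists). *)
Definition nat_min (P : nat -> Prop) : nat :=
  epsilon (inhabits 0%nat) (fun n => P n /\ forall m, P m -> (n <= m)%nat).

Definition word_len {G : group} (E : list G) (g : G) : nat :=
  nat_min (wordlen_le E g).

Definition cantor_dist {X A : Type} (wl : X -> nat) (x y : X -> A) : R :=
  if excluded_middle_informative (exists h, x h <> y h)
  then (/ 2) ^ (nat_min (fun k => exists h, wl h = k /\ x h <> y h))
  else 0.

Definition sensitive {X : Type} (d : X -> X -> R) (Phi : X -> X) : Prop :=
  exists eps, eps > 0 /\
    forall x delta, delta > 0 ->
      exists (t : nat) (y : X), d x y <= delta /\
        ~ (d (Nat.iter t Phi x) (Nat.iter t Phi y) <= eps).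

Definition CA_H {H : group} {A : Type} (S : list H)
  (mu : ({s : H | In s S} -> A) -> A) (x : H -> A) : H -> A :=
  fun h => mu (fun s => x (gmul h (proj1_sig s))).

Definition CA_G {G H : group} (iota : H -> G) {A : Type} (S : list H)
  (mu : ({s : H | In s S} -> A) -> A) (x : G -> A) : G -> A :=
  fun g => mu (fun s => x (gmul g (iota (proj1_sig s)))).

(* Copy a configuration x on H onto every left coset r ι(H) of G, choosing a
   representative r of minimal length in each coset: X (r ι h) = x h.  On each
   coset the automaton on G acts as the automaton on H acts on coordinates.  So
   if some Y, close to X on a large ball, has its orbit separate from that of X
   at some g with |g| < k, then restricting X and Y to the coset of g gives a y
   close to x (the representative r is no longer than g) whose orbit separates
   from that of x at the coordinate h of g.  As ι h = r^-1 g with |r|, |g| < k,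
   injectivity of ι confines h to a finite set depending on k only, which bounds
   |h| and gives the sensitivity constant for H. *)

From Stdlib Require Import Reals List.
From Stdlib Require Import Arith Lia Lra Classical ClassicalEpsilon.
From Stdlib Require Import FunctionalExtensionality PropExtensionality.
Open Scope R_scope.

Section GroupFacts.
Variable G : group.

Lemma gmulV_r (a : G) : gmul a (ginv a) = gone.
Proof.
  transitivity (gmul (gmul (ginv (ginv a)) (ginv a)) (gmul a (ginv a))).
  { rewrite gmulV, gmul1. reflexivity. }
  rewrite <- gmulA, (gmulA _ (ginv a) a), gmulV, gmul1. apply gmulV.
Qed.

Lemma gmul1_r (a : G) : gmul a gone = a.
Proof. rewrite <- (gmulV _ a), gmulA, gmulV_r, gmul1. reflexivity. Qed.

Lemma gmulKV (a z : G) : gmul (ginv a) (gmul a z) = z.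
Proof. rewrite gmulA, gmulV, gmul1. reflexivity. Qed.

Lemma gmul_cancel_l (a b c : G) : gmul a b = gmul a c -> b = c.
Proof. intro E. rewrite <- (gmulKV a b), <- (gmulKV a c), E. reflexivity. Qed.

Lemma fold_gmul_app (l1 l2 : list G) :
  fold_right gmul gone (l1 ++ l2) =
  gmul (fold_right gmul gone l1) (fold_right gmul gone l2).
Proof.
  induction l1 as [|a l1 IH]; simpl.
  - rewrite gmul1. reflexivity.
  - rewrite IH, gmulA. reflexivity.
Qed.

End GroupFacts.

Lemma ex_least_nat (P : nat -> Prop) n :
  P n -> exists m, P m /\ forall k, P k -> (m <= k)%nat.
Proof.
  intro Pn.
  destruct (dec_inh_nat_subset_has_unique_least_element P (fun k => classic (P k))
              (ex_intro _ n Pn)) as [m [least _]].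
  exists m. exact least.
Qed.

Lemma nat_min_spec (P : nat -> Prop) n :
  P n -> P (nat_min P) /\ forall m, P m -> (nat_min P <= m)%nat.
Proof. intro Pn. unfold nat_min. apply epsilon_spec, (ex_least_nat P n Pn). Qed.

Section WordLength.
Variables (G : group) (E : list G).

Lemma wordlen_le_weaken g n m : wordlen_le E g n -> (n <= m)%nat -> wordlen_le E g m.
Proof. intros [l [Hl [HE ->]]] Hnm. exists l. repeat split; auto. lia. Qed.

Lemma wordlen_le_mul a b n m :
  wordlen_le E a n -> wordlen_le E b m -> wordlen_le E (gmul a b) (n + m).
Proof.
  intros [l1 [H1 [E1 ->]]] [l2 [H2 [E2 ->]]]. exists (l1 ++ l2). repeat split.
  - rewrite length_app. lia.
  - intros s Hs. apply in_app_iff in Hs. destruct Hs; auto.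
  - symmetry. apply fold_gmul_app.
Qed.

Lemma wordlen_le_finite k : exists l, forall g, wordlen_le E g k -> In g l.
Proof.
  induction k as [|k [l Hl]].
  - exists (gone :: nil). intros g [w [Hw [_ ->]]].
    destruct w; simpl in Hw; [left; reflexivity | lia].
  - exists (l ++ flat_map (fun d => map (gmul d) l) E).
    intros g [[|d w] [Hw [HE ->]]]; apply in_or_app.
    + left. apply Hl. exists nil. simpl. repeat split; auto. lia.
    + right. apply in_flat_map. exists d. split; [apply HE; left; reflexivity|].
      simpl. apply in_map, Hl. exists w. simpl in Hw. repeat split; auto with arith.
      intros s Hs. apply HE. right. exact Hs.
Qed.

Lemma word_len_le g n : wordlen_le E g n -> (word_len E g <= n)%nat.
Proof. intro Hn. exact (proj2 (nat_min_spec _ n Hn) n Hn). Qed.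

Hypothesis E_gen : generates E.

Lemma wordlen_le_word_len g : wordlen_le E g (word_len E g).
Proof. destruct (E_gen g) as [n Hn]. exact (proj1 (nat_min_spec _ n Hn)). Qed.

Lemma word_len_mul a b : (word_len E (gmul a b) <= word_len E a + word_len E b)%nat.
Proof. apply word_len_le, wordlen_le_mul; apply wordlen_le_word_len. Qed.

Lemma word_len_ball_finite k : exists l, forall g, (word_len E g <= k)%nat -> In g l.
Proof.
  destruct (wordlen_le_finite k) as [l Hl]. exists l. intros g Hg.
  apply Hl, wordlen_le_weaken with (word_len E g); [apply wordlen_le_word_len | exact Hg].
Qed.

End WordLength.

Section Embedding.
Variables (G H : group) (iota : H -> G).
Hypothesis iota_mul : forall a b : H, iota (gmul a b) = gmul (iota a) (iota b).

Lemma hom_one : iota gone = gone.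
Proof. apply (gmul_cancel_l _ (iota gone)). rewrite <- iota_mul, gmul1, gmul1_r. reflexivity. Qed.

Lemma hom_fold (l : list H) : iota (fold_right gmul gone l) = fold_right gmul gone (map iota l).
Proof.
  induction l as [|a l IH]; simpl.
  - apply hom_one.
  - rewrite iota_mul, IH. reflexivity.
Qed.

Lemma word_len_hom (E : list H) (D : list G) (D_sup : forall s, In s E -> In (iota s) D) :
  generates E -> forall h, (word_len D (iota h) <= word_len E h)%nat.
Proof.
  intros E_gen h. destruct (wordlen_le_word_len H E E_gen h) as [l [Hl [HE Eh]]].
  apply word_len_le. exists (map iota l). repeat split.
  - rewrite length_map. exact Hl.
  - intros s Hs. apply in_map_iff in Hs. destruct Hs as [t [<- Ht]]. auto.
  - rewrite Eh. apply hom_fold.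
Qed.

Lemma word_len_translate (E : list H) (D : list G) (D_sup : forall s, In s E -> In (iota s) D) :
  generates E -> generates D ->
  forall r h, (word_len D (gmul r (iota h)) <= word_len D r + word_len E h)%nat.
Proof.
  intros E_gen D_gen r h.
  pose proof (word_len_mul G D D_gen r (iota h)).
  pose proof (word_len_hom E D D_sup E_gen h). lia.
Qed.

Hypothesis iota_inj : forall a b : H, iota a = iota b -> a = b.

Lemma word_len_bounded_on_preimage (E : list H) (L : list G) :
  exists K, forall h, In (iota h) L -> (word_len E h <= K)%nat.
Proof.
  induction L as [|a L [K HK]].
  - exists 0%nat. intros h [].
  - destruct (classic (exists h, iota h = a)) as [[ha <-]|no_preimage].
    + exists (Nat.max K (word_len E ha)). intros h [Eh|Hh].
      * apply iota_inj in Eh. subst. lia.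
      * specialize (HK h Hh). lia.
    + exists K. intros h [Eh|Hh]; [exfalso; eauto | auto].
Qed.

Lemma word_len_bounded_between_balls (D : list G) (E : list H) k :
  generates D ->
  exists K, forall r h, (word_len D r <= k)%nat ->
    (word_len D (gmul r (iota h)) <= k)%nat -> (word_len E h <= K)%nat.
Proof.
  intro D_gen. destruct (word_len_ball_finite G D D_gen k) as [ball Hball].
  destruct (word_len_bounded_on_preimage E
              (flat_map (fun r => map (gmul (ginv r)) ball) ball)) as [K HK].
  exists K. intros r h Hr Hrh. apply HK, in_flat_map. exists r. split; auto.
  rewrite <- (gmulKV _ r (iota h)). apply in_map. auto.
Qed.

Section Cosets.
Variable D : list G.

Definition in_coset (g z : G) : Prop := exists h, z = gmul g (iota h).

Definition coset_rep (g : G) : G :=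
  epsilon (inhabits gone) (fun r => in_coset g r /\
    forall r', in_coset g r' -> (word_len D r <= word_len D r')%nat).

Definition coset_coord (z : G) : H :=
  epsilon (inhabits gone) (fun h => z = gmul (coset_rep z) (iota h)).

Lemma in_coset_refl g : in_coset g g.
Proof. exists gone. rewrite hom_one, gmul1_r. reflexivity. Qed.

Lemma in_coset_trans g g' z : in_coset g g' -> in_coset g' z -> in_coset g z.
Proof. intros [h1 ->] [h2 ->]. exists (gmul h1 h2). rewrite iota_mul, gmulA. reflexivity. Qed.

Lemma in_coset_sym g g' : in_coset g g' -> in_coset g' g.
Proof.
  intros [h ->]. exists (ginv h).
  rewrite <- gmulA, <- iota_mul, gmulV_r, hom_one, gmul1_r. reflexivity.
Qed.

Lemma in_coset_eq g g' : in_coset g g' -> in_coset g = in_coset g'.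
Proof.
  intro Hgg'. apply functional_extensionality. intro z. apply propositional_extensionality.
  split; intro Hz; eauto using in_coset_trans, in_coset_sym.
Qed.

Lemma coset_rep_spec g :
  in_coset g (coset_rep g) /\
  forall r, in_coset g r -> (word_len D (coset_rep g) <= word_len D r)%nat.
Proof.
  unfold coset_rep. apply epsilon_spec.
  destruct (ex_least_nat (fun n => exists r, in_coset g r /\ word_len D r = n)
              (word_len D g) (ex_intro _ g (conj (in_coset_refl g) eq_refl)))
    as [m [[r [Hr <-]] least]].
  exists r. split; auto. intros r' Hr'. apply least. eauto.
Qed.

Lemma word_len_coset_rep_le g : (word_len D (coset_rep g) <= word_len D g)%nat.
Proof. apply coset_rep_spec, in_coset_refl. Qed.

Lemma coset_rep_eq g g' : in_coset g g' -> coset_rep g = coset_rep g'.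
Proof. intro Hgg'. unfold coset_rep. rewrite (in_coset_eq g g' Hgg'). reflexivity. Qed.

Lemma coset_rep_mul_coord z : z = gmul (coset_rep z) (iota (coset_coord z)).
Proof.
  apply (epsilon_spec (inhabits gone) (fun h => z = gmul (coset_rep z) (iota h))).
  destruct (in_coset_sym _ _ (proj1 (coset_rep_spec z))) as [h Hh]. eauto.
Qed.

Lemma coset_coord_rep_mul g h : coset_coord (gmul (coset_rep g) (iota h)) = h.
Proof.
  set (z := gmul (coset_rep g) (iota h)).
  assert (Hz : coset_rep z = coset_rep g).
  { symmetry. apply coset_rep_eq, in_coset_trans with (coset_rep g).
    - apply coset_rep_spec.
    - exists h. reflexivity. }
  pose proof (coset_rep_mul_coord z) as Ez. rewrite Hz in Ez.
  symmetry. apply iota_inj, (gmul_cancel_l _ (coset_rep g)), Ez.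
Qed.

End Cosets.

Lemma CA_H_translate {A : Type} (S : list H) (mu : ({s : H | In s S} -> A) -> A)
  (Z : G -> A) (r : G) :
  CA_H S mu (fun h => Z (gmul r (iota h))) = fun h => CA_G iota S mu Z (gmul r (iota h)).
Proof.
  apply functional_extensionality. intro h. unfold CA_G, CA_H. f_equal.
  apply functional_extensionality. intro s. rewrite iota_mul, gmulA. reflexivity.
Qed.

Lemma iter_CA_H_translate {A : Type} (S : list H) (mu : ({s : H | In s S} -> A) -> A)
  (Z : G -> A) (r : G) t :
  Nat.iter t (CA_H S mu) (fun h => Z (gmul r (iota h))) =
  fun h => Nat.iter t (CA_G iota S mu) Z (gmul r (iota h)).
Proof.
  induction t as [|t IH]; simpl; [reflexivity|].
  rewrite IH. apply CA_H_translate.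
Qed.

End Embedding.

Lemma half_pow_pos n : 0 < (/2)^n.
Proof. apply pow_lt. lra. Qed.

Lemma half_pow_le_iff a b : (/2)^a <= (/2)^b <-> (b <= a)%nat.
Proof.
  rewrite !pow_inv. split; intro Hab.
  - destruct (le_lt_dec b a) as [|Hlt]; [assumption|].
    exfalso. apply (Rle_not_lt _ _ Hab), Rinv_lt_contravar.
    + apply Rmult_lt_0_compat; apply pow_lt; lra.
    + apply Rlt_pow; [lra | exact Hlt].
  - apply Rinv_le_contravar; [apply pow_lt; lra | apply Rle_pow; [lra | exact Hab]].
Qed.

Lemma half_pow_small e : 0 < e -> exists k, (/2)^k <= e.
Proof.
  intro He. destruct (pow_lt_1_zero (/2)) with e as [k Hk]; auto.
  { rewrite Rabs_pos_eq; lra. }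
  exists k. specialize (Hk k (le_n k)).
  rewrite Rabs_pos_eq in Hk; [lra | left; apply half_pow_pos].
Qed.

Lemma cantor_dist_le_half_pow {X A : Type} (wl : X -> nat) (x y : X -> A) n :
  cantor_dist wl x y <= (/2)^n <-> forall h, (wl h < n)%nat -> x h = y h.
Proof.
  unfold cantor_dist. destruct (excluded_middle_informative _) as [[h0 Hh0]|agree].
  - set (P := fun k => exists h, wl h = k /\ x h <> y h).
    destruct (nat_min_spec P (wl h0) (ex_intro _ h0 (conj eq_refl Hh0)))
      as [[h1 [E1 D1]] least].
    rewrite half_pow_le_iff. split.
    + intros Hn h Hh. apply NNPP. intro Hne.
      specialize (least (wl h) (ex_intro _ h (conj eq_refl Hne))). lia.
    + intro Hag. destruct (le_lt_dec n (nat_min P)) as [|Hlt]; [assumption|].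
      exfalso. apply D1, Hag. lia.
  - split; intros _.
    + intros h _. apply NNPP. intro Hne. eauto.
    + left. apply half_pow_pos.
Qed.

Lemma cantor_dist_gt_half_pow {X A : Type} (wl : X -> nat) (x y : X -> A) n :
  ~ cantor_dist wl x y <= (/2)^n <-> exists h, (wl h < n)%nat /\ x h <> y h.
Proof.
  rewrite cantor_dist_le_half_pow. split.
  - intro Hn. apply not_all_ex_not in Hn. destruct Hn as [h Hh].
    apply imply_to_and in Hh. eauto.
  - intros [h [Hh Hne]] Hag. auto.
Qed.

Lemma cantor_dist_comp_le {X Y A : Type} (wlX : X -> nat) (wlY : Y -> nat)
  (phi : Y -> X) c m (x y : X -> A) :
  (forall h, (wlX (phi h) <= c + wlY h)%nat) ->
  cantor_dist wlX x y <= (/2)^(c + m) ->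
  cantor_dist wlY (fun h => x (phi h)) (fun h => y (phi h)) <= (/2)^m.
Proof.
  rewrite !cantor_dist_le_half_pow. intros Hphi Hxy h Hh.
  apply Hxy. specialize (Hphi h). lia.
Qed.

Theorem proposition6
  (G H : group) (iota : H -> G)
  (iota_mul : forall a b : H, iota (gmul a b) = gmul (iota a) (iota b))
  (iota_inj : forall a b : H, iota a = iota b -> a = b)
  (E_H : list H) (E_H_inv : inv_closed E_H) (E_H_gen : generates E_H)
  (D : list G) (D_inv : inv_closed D) (D_gen : generates D)
  (D_sup : forall s, In s E_H -> In (iota s) D)
  (A : Type) (A_fin : exists l : list A, forall a, In a l)
  (S : list H) (mu : ({s : H | In s S} -> A) -> A) :
  sensitive (cantor_dist (word_len D)) (CA_G iota S mu) ->
  sensitive (cantor_dist (word_len E_H)) (CA_H S mu).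
Proof.
  intros [eps [eps_pos sensG]].
  destruct (half_pow_small eps eps_pos) as [k Hk].
  destruct (word_len_bounded_between_balls G H iota iota_inj D E_H k D_gen) as [K HK].
  exists ((/2)^(Datatypes.S K)). split; [apply half_pow_pos|].
  intros x delta delta_pos.
  destruct (half_pow_small delta delta_pos) as [m Hm].
  set (X := fun z => x (coset_coord G H iota D z)).
  destruct (sensG X ((/2)^(k + m)) (half_pow_pos _)) as [t [Y [HXY Hfar]]].
  assert (Hfar_k : ~ cantor_dist (word_len D) (Nat.iter t (CA_G iota S mu) X)
                       (Nat.iter t (CA_G iota S mu) Y) <= (/2)^k) by lra.
  apply cantor_dist_gt_half_pow in Hfar_k. destruct Hfar_k as [g [Hg Hdiff]].
  set (r := coset_rep G H iota D g).
  assert (Hr : (word_len D r <= k)%nat)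
    by exact (Nat.le_trans _ _ _ (word_len_coset_rep_le G H iota iota_mul D g)
                (Nat.lt_le_incl _ _ Hg)).
  assert (Ex : x = fun h => X (gmul r (iota h))).
  { apply functional_extensionality. intro h. unfold X, r.
    rewrite coset_coord_rep_mul; auto. }
  exists t, (fun h => Y (gmul r (iota h))). split.
  - apply Rle_trans with ((/2)^m); [|exact Hm]. rewrite Ex.
    apply cantor_dist_comp_le with (wlX := word_len D) (c := k); [|exact HXY]. intro h.
    pose proof (word_len_translate G H iota iota_mul E_H D D_sup E_H_gen D_gen r h). lia.
  - apply cantor_dist_gt_half_pow. exists (coset_coord G H iota D g).
    pose proof (coset_rep_mul_coord G H iota iota_mul D g) as Eg. fold r in Eg.
    split.
    + apply Nat.lt_succ_r, (HK r); [exact Hr | rewrite <- Eg; lia].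
    + rewrite Ex, !iter_CA_H_translate by exact iota_mul. rewrite <- Eg. exact Hdiff.
Qed.
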